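(* Let $R$ be an integral domain with field of fractions $\mathbb{Q}(R)$, let $M$ be a torsion-free $R$-module, and let $M_{\mathbb{Q}}=M\otimes_R\mathbb{Q}(R)$. Then the map $\mathbb{P}(M)\to\mathbb{P}(M_{\mathbb{Q}})$, $[m]\mapsto[m\otimes1]$, is a well-defined bijection.
   Context: For a module $N$ over an integral domain $S$, let $N^\circ=N\setminus\{0\}$; define $x\sim'y$ on $N^\circ$ if there exist $m\in N$ and $r,s\in S$ with $x=rm$, $y=sm$; let $\sim$ be the equivalence relation generated by $\sim'$; and let $\mathbb{P}(N)=N^\circ/\sim$. For $M_{\mathbb{Q}}$ this is taken over the ring $\mathbb{Q}(R)$, where it coincides with the usual projective space of the $\mathbb{Q}(R)$-vector space. $M$ is torsion-free if $rm=0$ with $r\ne0$ implies $m=0$. *)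

From HB Require Import structures.
From mathcomp Require Import all_boot all_order all_algebra.
From mathcomp Require Import fraction.
From Stdlib Require Import Relations.
Set Implicit Arguments. Unset Strict Implicit. Unset Printing Implicit Defensive.
Import GRing.Theory.
Local Open Scope ring_scope.

Definition proj_rel (S : idomainType) (N : lmodType S) (x y : N) : Prop :=
  x != 0 /\ y != 0 /\ exists (m : N) (r s : S), x = r *: m /\ y = s *: m.

(* Only ever used on nonzero
   elements, where it is exactly the equivalence on N° generated by ~'
   (the reflexive closure only adds x ~ x, and x ~' x holds already for x <> 0). *)
Definition proj_equiv (S : idomainType) (N : lmodType S) : relation N :=
  clos_refl_sym_trans N (@proj_rel S N).

Definition torsion_free (S : idomainType) (M : lmodType S) : Prop :=
  forall (r : S) (m : M), r != 0 -> r *: m = 0 -> m = 0.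

(* iota : M -> V exhibits V as M (x)_R Q(R) (with iota m = m (x) 1):
   iota is R-linear (R acting on V through R -> Q(R)), and it has the
   universal property of extension of scalars: every R-linear map from M
   into a Q(R)-vector space factors uniquely through a Q(R)-linear map on V. *)
Definition is_base_change_to_frac (R : idomainType) (M : lmodType R)
    (V : lmodType {fraction R}) (iota : M -> V) : Prop :=
  [/\ (forall x y : M, iota (x + y) = iota x + iota y),
      (forall (r : R) (m : M), iota (r *: m) = (@FracField.tofrac R r) *: iota m)
    & forall (W : lmodType {fraction R}) (f : M -> W),
        (forall x y : M, f (x + y) = f x + f y) ->
        (forall (r : R) (m : M), f (r *: m) = (@FracField.tofrac R r) *: f m) ->
        exists g : V -> W,
          [/\ (forall (a : {fraction R}) (u v : V), g (a *: u + v) = a *: g u + g v),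
              (forall m : M, g (iota m) = f m)
            & forall g' : V -> W,
                (forall (a : {fraction R}) (u v : V), g' (a *: u + v) = a *: g' u + g' v) ->
                (forall m : M, g' (iota m) = f m) ->
                forall v : V, g' v = g v]].

From Stdlib Require Import Relations.
From HB Require Import structures.
From mathcomp Require Import all_boot all_order all_algebra.
From mathcomp Require Import fraction generic_quotient ring.
Set Implicit Arguments. Unset Strict Implicit. Unset Printing Implicit Defensive.
Import GRing.Theory.
Local Open Scope ring_scope.
Local Open Scope quotient_scope.

(* M_Q is realised concretely as the module of fractions m/s (s <> 0) over M,
   a Q(R)-vector space because M is torsion-free.  The universal property of
   iota gives a linear g from M_Q to the fractions with g (iota m) = m/1, and
   m/1 = n/1 forces m = n, so iota is injective.  The map m/s |-> s^-1 iota m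
   is linear, so by uniqueness in the universal property it is a left inverse
   of g: every vector of M_Q is some s^-1 iota m.  Finally, nonzero vectors of a
   torsion-free module are projectively equivalent iff a u = b v for nonzero
   scalars a, b, and clearing denominators moves such relations from M_Q to M. *)

Local Notation "x %:F" := (@FracField.tofrac _ x).

Section FractionField.
Variable R : idomainType.

Lemma tofrac_inj : injective (@FracField.tofrac R).
Proof. by move=> p q /eqP; rewrite tofrac_eq => /eqP. Qed.

Lemma tofrac_numer (a : {fraction R}) : (\n_(repr a))%:F = a * (\d_(repr a))%:F.
Proof.
rewrite -{2}(reprK a); move: (repr a) => x.
unlock FracField.tofrac; rewrite -[_ * _]/(FracField.mul _ _) !piE.
apply/eqmodP; rewrite /= FracField.equivfE /FracField.mulf.
by rewrite !numden_Ratio ?mulf_neq0 ?oner_neq0 ?denom_ratioP // mulr1 mul1r.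
Qed.

Lemma frac_common_denom (a b : {fraction R}) :
  exists d na nb : R, [/\ d != 0, na%:F = d%:F * a & nb%:F = d%:F * b].
Proof.
exists (\d_(repr a) * \d_(repr b)), (\n_(repr a) * \d_(repr b)),
  (\n_(repr b) * \d_(repr a)).
split; first by rewrite mulf_neq0 ?denom_ratioP.
all: by rewrite !tofracM !tofrac_numer; ring.
Qed.

End FractionField.

Section FractionArithmetic.
Variables (F : fieldType) (V : lmodType F).

Lemma scale_inv_add (s t : F) (x y : V) : s != 0 -> t != 0 ->
  (s * t)^-1 *: (t *: x + s *: y) = s^-1 *: x + t^-1 *: y.
Proof.
move=> s0 t0; rewrite scalerDr !scalerA.
by congr (_ *: x + _ *: y); field; rewrite s0 t0.
Qed.

Lemma scale_inv_mul (a d s : F) (x : V) : d != 0 ->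
  (d * s)^-1 *: ((a * d) *: x) = a *: (s^-1 *: x).
Proof.
move=> d0; rewrite !scalerA; congr (_ *: x).
by rewrite invfM [a * d]mulrC mulrACA mulVf // mul1r mulrC.
Qed.

End FractionArithmetic.

Section ProjectiveEquivalence.
Variables (S : idomainType) (N : lmodType S).

Lemma proj_equiv_scaler (u : N) a : u != 0 -> a *: u != 0 -> proj_equiv u (a *: u).
Proof.
by move=> u0 au0; apply: rst_step; do 2!split=> //; exists u, 1, a; rewrite scale1r.
Qed.

Lemma proj_equiv_scale (u v : N) : proj_equiv u v ->
  exists a b : S, [/\ a != 0, b != 0 & a *: u = b *: v].
Proof.
elim=> {u v} [u v [u0 [v0 [w [r [s [eu ev]]]]]] | u | u v _ [a [b [a0 b0 e]]] |].
- exists s, r; split; last by rewrite eu ev !scalerA mulrC.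
  + by apply: contraNneq v0 => s0; rewrite ev s0 scale0r.
  + by apply: contraNneq u0 => r0; rewrite eu r0 scale0r.
- by exists 1, 1; rewrite oner_neq0.
- by exists b, a.
- move=> u v w _ [a [b [a0 b0 e]]] _ [c [d [c0 d0 e']]].
  exists (c * a), (b * d); rewrite !mulf_neq0 //; split=> //.
  by rewrite -scalerA e scalerA [c * b]mulrC -[(b * c) *: v]scalerA e' scalerA.
Qed.

Lemma scale_proj_equiv (u v : N) (a b : S) : torsion_free N ->
  u != 0 -> v != 0 -> a != 0 -> b != 0 -> a *: u = b *: v -> proj_equiv u v.
Proof.
move=> tfN u0 v0 a0 b0 e.
have au0 : a *: u != 0 by apply: contra_neq u0; apply: tfN.
have bv0 : b *: v != 0 by rewrite -e.
apply: (rst_trans _ _ _ (a *: u)); first exact: proj_equiv_scaler.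
by rewrite e; apply: rst_sym; apply: proj_equiv_scaler.
Qed.

End ProjectiveEquivalence.

Lemma proj_equiv_map (S1 S2 : idomainType) (N1 : lmodType S1) (N2 : lmodType S2)
    (phi : S1 -> S2) (f : N1 -> N2) :
  (forall r m, f (r *: m) = phi r *: f m) -> (forall m, m != 0 -> f m != 0) ->
  forall x y, proj_equiv x y -> proj_equiv (f x) (f y).
Proof.
move=> fZ f_neq0 x y.
elim=> {x y} [x y [x0 [y0 [w [r [s [ex ey]]]]]] | x | x y _ | x y z _ + _].
- apply: rst_step; split; first exact: f_neq0; split; first exact: f_neq0.
  by exists (f w), (phi r), (phi s); rewrite ex ey !fZ.
- exact: rst_refl.
- exact: rst_sym.
- exact: rst_trans.
Qed.

Section Localization.
Variables (R : idomainType) (M : lmodType R).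
Hypothesis tfM : torsion_free M.

Definition lfrac := {x : M * R | x.2 != 0}.
Definition lfrac0 : lfrac := exist _ (0, 1) (oner_neq0 R).
(* [Lfrac m s] is m/s, and the junk value 0/1 when s = 0. *)
Definition Lfrac (m : M) (s : R) : lfrac := insubd lfrac0 (m, s).

Lemma val_Lfrac m s : s != 0 -> val (Lfrac m s) = (m, s).
Proof. by move=> s0; rewrite /Lfrac /insubd insubT. Qed.

Definition lfrac_equiv (x y : lfrac) :=
  (val y).2 *: (val x).1 == (val x).2 *: (val y).1.

Lemma lfrac_equiv_refl : reflexive lfrac_equiv.
Proof. by move=> x; rewrite /lfrac_equiv. Qed.

Lemma lfrac_equiv_sym : symmetric lfrac_equiv.
Proof. by move=> x y; rewrite /lfrac_equiv eq_sym. Qed.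

Lemma lfrac_equiv_trans : transitive lfrac_equiv.
Proof.
move=> [[n t] /= t0] [[m s] /= s0] [[p u] /= u0]; rewrite /lfrac_equiv /=.
move=> /eqP e1 /eqP e2; apply/eqP/subr0_eq/(tfM t0).
rewrite scalerBr !scalerA [t * u]mulrC [t * s]mulrC -!scalerA e1 -e2.
by rewrite !scalerA mulrC subrr.
Qed.

Canonical lfrac_equiv_equiv :=
  EquivRel lfrac_equiv lfrac_equiv_refl lfrac_equiv_sym lfrac_equiv_trans.

Definition fracmod := {eq_quot lfrac_equiv}.
HB.instance Definition _ : EqQuotient _ lfrac_equiv fracmod := EqQuotient.on fracmod.
HB.instance Definition _ := Choice.on fracmod.

Lemma piLfrac_eq m n s t : s != 0 -> t != 0 ->
  (\pi_fracmod (Lfrac m s) == \pi_fracmod (Lfrac n t)) = (t *: m == s *: n).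
Proof. by move=> s0 t0; rewrite eqmodE /= /lfrac_equiv !val_Lfrac. Qed.

Lemma fracmodW (P : fracmod -> Prop) :
  (forall m s, s != 0 -> P (\pi_fracmod (Lfrac m s))) -> forall u, P u.
Proof.
move=> IH; elim/quotW => -[[m s] /= s0].
have -> : exist _ (m, s) s0 = Lfrac m s by apply: val_inj; rewrite val_Lfrac.
exact: IH.
Qed.

Definition lfrac_add (x y : lfrac) :=
  Lfrac ((val y).2 *: (val x).1 + (val x).2 *: (val y).1) ((val x).2 * (val y).2).
Definition lfrac_opp (x : lfrac) := Lfrac (- (val x).1) (val x).2.
Definition lfrac_scale (a : {fraction R}) (x : lfrac) :=
  Lfrac (\n_(repr a) *: (val x).1) (\d_(repr a) * (val x).2).

Lemma lfrac_add_Lfrac m n s t : s != 0 -> t != 0 ->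
  lfrac_add (Lfrac m s) (Lfrac n t) = Lfrac (t *: m + s *: n) (s * t).
Proof. by move=> s0 t0; rewrite /lfrac_add !val_Lfrac. Qed.

Lemma lfrac_opp_Lfrac m s : s != 0 -> lfrac_opp (Lfrac m s) = Lfrac (- m) s.
Proof. by move=> s0; rewrite /lfrac_opp !val_Lfrac. Qed.

Lemma lfrac_scale_Lfrac a m s : s != 0 ->
  lfrac_scale a (Lfrac m s) = Lfrac (\n_(repr a) *: m) (\d_(repr a) * s).
Proof. by move=> s0; rewrite /lfrac_scale !val_Lfrac. Qed.

Lemma lfrac_add_compat x x' y y' : lfrac_equiv x x' -> lfrac_equiv y y' ->
  lfrac_equiv (lfrac_add x y) (lfrac_add x' y').
Proof.
move: x x' y y' => [[m s] /= s0] [[m' s'] /= s'0] [[n t] /= t0] [[n' t'] /= t'0].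
rewrite /lfrac_equiv /lfrac_add /= !val_Lfrac ?mulf_neq0 //= => /eqP e1 /eqP e2.
apply/eqP; rewrite !scalerDr !scalerA.
have -> : s' * t' * t = (t' * t) * s' by ring.
have -> : s * t * t' = (t' * t) * s by ring.
have -> : s' * t' * s = (s' * s) * t' by ring.
have -> : s * t * s' = (s' * s) * t by ring.
by rewrite -!(scalerA (t' * t)) -!(scalerA (s' * s)) e1 e2.
Qed.

Lemma lfrac_opp_compat x x' :
  lfrac_equiv x x' -> lfrac_equiv (lfrac_opp x) (lfrac_opp x').
Proof.
move: x x' => [[m s] /= s0] [[m' s'] /= s'0].
by rewrite /lfrac_equiv /lfrac_opp /= !val_Lfrac //= !scalerN => /eqP ->.
Qed.

Lemma lfrac_scale_compat a x x' : lfrac_equiv x x' ->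
  lfrac_equiv (lfrac_scale a x) (lfrac_scale a x').
Proof.
move: x x' => [[m s] /= s0] [[m' s'] /= s'0].
rewrite /lfrac_equiv /lfrac_scale /= !val_Lfrac ?mulf_neq0 ?denom_ratioP //= => /eqP e.
apply/eqP; rewrite !scalerA.
have -> : \d_(repr a) * s' * \n_(repr a) = (\d_(repr a) * \n_(repr a)) * s' by ring.
have -> : \d_(repr a) * s * \n_(repr a) = (\d_(repr a) * \n_(repr a)) * s by ring.
by rewrite -!scalerA e.
Qed.

Definition fracmod_add := lift_op2 fracmod lfrac_add.
Definition fracmod_opp := lift_op1 fracmod lfrac_opp.
Definition fracmod_scale a := lift_op1 fracmod (lfrac_scale a).

Lemma pi_fracmod_add : {morph \pi : x y / lfrac_add x y >-> fracmod_add x y}.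
Proof.
move=> x y; unlock fracmod_add; apply/eqmodP.
by apply: lfrac_add_compat; rewrite -eqmodE reprK.
Qed.
Canonical pi_fracmod_add_morph := PiMorph2 pi_fracmod_add.

Lemma pi_fracmod_opp : {morph \pi : x / lfrac_opp x >-> fracmod_opp x}.
Proof.
move=> x; unlock fracmod_opp; apply/eqmodP.
by apply: lfrac_opp_compat; rewrite -eqmodE reprK.
Qed.
Canonical pi_fracmod_opp_morph := PiMorph1 pi_fracmod_opp.

Lemma pi_fracmod_scale a : {morph \pi : x / lfrac_scale a x >-> fracmod_scale a x}.
Proof.
move=> x; unlock fracmod_scale; apply/eqmodP.
by apply: lfrac_scale_compat; rewrite -eqmodE reprK.
Qed.
Canonical pi_fracmod_scale_morph a := PiMorph1 (pi_fracmod_scale a).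

Definition fracmod0 : fracmod := \pi_fracmod (Lfrac 0 1).

Lemma fracmod_addA : associative fracmod_add.
Proof.
elim/fracmodW=> m s s0; elim/fracmodW=> n t t0; elim/fracmodW=> p u u0.
rewrite !piE !lfrac_add_Lfrac ?mulf_neq0 // mulrA.
rewrite !scalerDr !scalerA addrA.
by congr (\pi_fracmod (Lfrac (_ *: _ + _ *: _ + _ *: _) _)); ring.
Qed.

Lemma fracmod_addC : commutative fracmod_add.
Proof.
elim/fracmodW=> m s s0; elim/fracmodW=> n t t0.
by rewrite !piE !lfrac_add_Lfrac // addrC mulrC.
Qed.

Lemma fracmod_add0 : left_id fracmod0 fracmod_add.
Proof.
elim/fracmodW=> m s s0.
by rewrite !piE lfrac_add_Lfrac ?oner_neq0 // scaler0 add0r scale1r mul1r.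
Qed.

Lemma fracmod_addN : left_inverse fracmod0 fracmod_opp fracmod_add.
Proof.
elim/fracmodW=> m s s0; rewrite !piE lfrac_opp_Lfrac // lfrac_add_Lfrac //.
by apply/eqP; rewrite piLfrac_eq ?mulf_neq0 ?oner_neq0 // scalerN addNr !scaler0.
Qed.

HB.instance Definition _ :=
  GRing.isZmodule.Build fracmod fracmod_addA fracmod_addC fracmod_add0 fracmod_addN.

Lemma piLfrac_scale m (a b s t : R) : s != 0 -> t != 0 -> t * a = s * b ->
  \pi_fracmod (Lfrac (a *: m) s) = \pi_fracmod (Lfrac (b *: m) t).
Proof. by move=> s0 t0 e; apply/eqP; rewrite piLfrac_eq // !scalerA e. Qed.

Lemma fracmod_scaleA a b u :
  fracmod_scale a (fracmod_scale b u) = fracmod_scale (a * b) u.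
Proof.
elim/fracmodW: u => m s s0; rewrite !piE !lfrac_scale_Lfrac ?mulf_neq0 ?denom_ratioP //.
rewrite scalerA; apply: piLfrac_scale; rewrite ?mulf_neq0 ?denom_ratioP //.
by apply: tofrac_inj; rewrite !tofracM !tofrac_numer; ring.
Qed.

Lemma fracmod_scale1 : left_id 1 fracmod_scale.
Proof.
elim/fracmodW=> m s s0; rewrite piE lfrac_scale_Lfrac // -{2}[m]scale1r.
apply: piLfrac_scale; rewrite ?mulf_neq0 ?denom_ratioP //.
by apply: tofrac_inj; rewrite !tofracM tofrac_numer tofrac1; ring.
Qed.

Lemma fracmod_scaleDr : right_distributive fracmod_scale +%R.
Proof.
move=> a; elim/fracmodW=> m s s0; elim/fracmodW=> n t t0.
rewrite -[_ + _]/(fracmod_add _ _) -[fracmod_scale a _ + _]/(fracmod_add _ _) !piE.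
rewrite [lfrac_add (Lfrac m s) _]lfrac_add_Lfrac //.
rewrite !lfrac_scale_Lfrac ?mulf_neq0 ?denom_ratioP //.
rewrite lfrac_add_Lfrac ?mulf_neq0 ?denom_ratioP //.
apply/eqP; rewrite piLfrac_eq ?mulf_neq0 ?denom_ratioP //; apply/eqP.
by rewrite !scalerDr !scalerA; congr (_ *: _ + _ *: _); ring.
Qed.

Lemma fracmod_scaleDl u : {morph fracmod_scale^~ u : a b / a + b}.
Proof.
elim/fracmodW: u => m s s0 a b.
rewrite -[fracmod_scale a _ + _]/(fracmod_add _ _) !piE.
rewrite !lfrac_scale_Lfrac ?mulf_neq0 ?denom_ratioP //.
rewrite lfrac_add_Lfrac ?mulf_neq0 ?denom_ratioP //.
rewrite !scalerA -scalerDl; apply: piLfrac_scale; rewrite ?mulf_neq0 ?denom_ratioP //.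
by apply: tofrac_inj; rewrite !(tofracM, tofracD) !tofrac_numer; ring.
Qed.

HB.instance Definition _ := GRing.Zmodule_isLmodule.Build {fraction R} fracmod
  fracmod_scaleA fracmod_scale1 fracmod_scaleDr fracmod_scaleDl.

Lemma fracmod_addE m n s t : s != 0 -> t != 0 ->
  \pi_fracmod (Lfrac m s) + \pi_fracmod (Lfrac n t)
    = \pi_fracmod (Lfrac (t *: m + s *: n) (s * t)).
Proof. by move=> s0 t0; rewrite -[_ + _]/(fracmod_add _ _) piE lfrac_add_Lfrac. Qed.

Lemma fracmod_scaleE a m s : s != 0 ->
  a *: \pi_fracmod (Lfrac m s)
    = \pi_fracmod (Lfrac (\n_(repr a) *: m) (\d_(repr a) * s)).
Proof. by move=> s0; rewrite -[_ *: _]/(fracmod_scale _ _) piE lfrac_scale_Lfrac. Qed.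

End Localization.


Section BaseChange.
Variables (R : idomainType) (M : lmodType R).
Variables (MQ : lmodType {fraction R}) (iota : M -> MQ).
Hypothesis tfM : torsion_free M.
Hypothesis iota_bc : is_base_change_to_frac iota.

Local Notation L := (fracmod tfM).

Let iotaD x y : iota (x + y) = iota x + iota y.
Proof. by case: iota_bc. Qed.

Let iotaZ r m : iota (r *: m) = r%:F *: iota m.
Proof. by case: iota_bc. Qed.

Lemma base_change0 : iota 0 = 0.
Proof. by apply: (addrI (iota 0)); rewrite -iotaD !addr0. Qed.

Definition to_fracmod (m : M) : L := \pi_L (Lfrac m 1).

Lemma to_fracmodD x y : to_fracmod (x + y) = to_fracmod x + to_fracmod y.
Proof. by rewrite /to_fracmod fracmod_addE ?oner_neq0 // !scale1r mulr1. Qed.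

Lemma to_fracmodZ r m : to_fracmod (r *: m) = r%:F *: to_fracmod m.
Proof.
rewrite /to_fracmod fracmod_scaleE ?oner_neq0 //.
apply: piLfrac_scale; rewrite ?mulf_neq0 ?oner_neq0 ?denom_ratioP //.
by apply: tofrac_inj; rewrite !tofracM tofrac_numer tofrac1; ring.
Qed.

Lemma to_fracmod_inj : injective to_fracmod.
Proof.
move=> x y /eqP; rewrite piLfrac_eq ?oner_neq0 //.
by rewrite !scale1r => /eqP.
Qed.

Definition iota_frac (u : L) : MQ :=
  ((val (repr u)).2%:F)^-1 *: iota (val (repr u)).1.

Lemma iota_frac_pi m s : s != 0 -> iota_frac (\pi_L (Lfrac m s)) = s%:F^-1 *: iota m.
Proof.
move=> s0; rewrite /iota_frac; have := reprK (\pi_L (Lfrac m s)).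
case: (repr _) => -[n t] /= t0 /eqP.
rewrite eqmodE /= /lfrac_equiv val_Lfrac //= => /eqP /(congr1 iota).
rewrite !iotaZ => e.
have s0' : s%:F != 0 by rewrite tofrac_eq0.
have t0' : t%:F != 0 by rewrite tofrac_eq0.
apply: (scalerI (mulf_neq0 s0' t0')).
by rewrite -!scalerA scalerKV // e [in RHS]scalerA [s%:F * _]mulrC -scalerA scalerKV.
Qed.

Lemma iota_fracD (u v : L) : iota_frac (u + v) = iota_frac u + iota_frac v.
Proof.
elim/fracmodW: u => m s s0; elim/fracmodW: v => n t t0.
rewrite fracmod_addE // !iota_frac_pi ?mulf_neq0 // iotaD !iotaZ tofracM.
by rewrite scale_inv_add ?tofrac_eq0.
Qed.

Lemma iota_fracZ (c : {fraction R}) (u : L) : iota_frac (c *: u) = c *: iota_frac u.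
Proof.
elim/fracmodW: u => m s s0.
rewrite fracmod_scaleE // !iota_frac_pi ?mulf_neq0 ?denom_ratioP // iotaZ tofracM.
by rewrite tofrac_numer scale_inv_mul ?tofrac_eq0 ?denom_ratioP.
Qed.

Lemma base_change_injective : injective iota.
Proof.
case: iota_bc => _ _ /(_ L to_fracmod to_fracmodD to_fracmodZ) [g [_ g_iota _]].
by move=> x y e; apply: to_fracmod_inj; rewrite -!g_iota e.
Qed.

Lemma base_change_neq0 m : m != 0 -> iota m != 0.
Proof. by rewrite -base_change0 (inj_eq base_change_injective). Qed.

Lemma base_change_fraction v : exists m s, s != 0 /\ v = s%:F^-1 *: iota m.
Proof.
case: iota_bc => _ _ univ.
have [g [g_linear g_iota _]] := univ L to_fracmod to_fracmodD to_fracmodZ.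
have [h [_ _ uniq]] := univ MQ iota iotaD iotaZ.
have iota_fracK w : iota_frac (g w) = w.
  transitivity (h w); last by symmetry; apply: (uniq id).
  apply: (uniq (iota_frac \o g)) => [a u u'|m] /=.
  - by rewrite g_linear iota_fracD iota_fracZ.
  - by rewrite g_iota iota_frac_pi ?oner_neq0 // tofrac1 invr1 scale1r.
rewrite -(iota_fracK v); elim/fracmodW: (g v) => m s s0.
by exists m, s; rewrite iota_frac_pi.
Qed.

Lemma proj_equiv_base_change x y : proj_equiv x y -> proj_equiv (iota x) (iota y).
Proof. exact: proj_equiv_map iotaZ base_change_neq0 x y. Qed.

Lemma base_change_reflect_proj_equiv x y : x != 0 -> y != 0 ->
  proj_equiv (iota x) (iota y) -> proj_equiv x y.
Proof.
move=> x0 y0 /proj_equiv_scale[a [b [a0 b0 e]]].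
have [d [na [nb [d0 ena enb]]]] := frac_common_denom a b.
have na0 : na != 0 by rewrite -tofrac_eq0 ena mulf_neq0 ?tofrac_eq0.
have nb0 : nb != 0 by rewrite -tofrac_eq0 enb mulf_neq0 ?tofrac_eq0.
apply: (scale_proj_equiv tfM x0 y0 na0 nb0); apply: base_change_injective.
by rewrite !iotaZ ena enb -!scalerA e.
Qed.

Lemma base_change_proj_surj v : v != 0 ->
  exists m, m != 0 /\ proj_equiv (iota m) v.
Proof.
move=> v0; have [m [s [s0 ev]]] := base_change_fraction v.
have im0 : iota m != 0 by apply: contraNneq v0 => im0; rewrite ev im0 scaler0.
have m0 : m != 0 by apply: contraNneq im0 => ->; rewrite base_change0.
exists m; split=> //; rewrite ev; apply: proj_equiv_scaler => //.
by rewrite -ev.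
Qed.

End BaseChange.

Theorem theorem4p13 (R : idomainType) (M : lmodType R)
    (MQ : lmodType {fraction R}) (iota : M -> MQ) :
  is_base_change_to_frac iota ->
  torsion_free M ->
  [/\ (forall m : M, m != 0 -> iota m != 0),
      (forall x y : M, x != 0 -> y != 0 ->
         proj_equiv x y -> proj_equiv (iota x) (iota y)),
      (forall x y : M, x != 0 -> y != 0 ->
         proj_equiv (iota x) (iota y) -> proj_equiv x y)
    & (forall v : MQ, v != 0 ->
         exists m : M, m != 0 /\ proj_equiv (iota m) v)].
Proof.
move=> iota_bc tfM; split.
- exact: base_change_neq0.
- by move=> x y _ _; apply: proj_equiv_base_change.
- exact: base_change_reflect_proj_equiv.
- exact: base_change_proj_surj.
Qed.
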